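(* Consider the fixed-final-time optimal control problem described in the context. Along an optimal trajectory, the optimal Evader heading $\psi^*$ is constant backwards in time from the final time $T$ until either (1) the constraint is reached (i.e. $\|\mathbf{x}\|=1$), or (2) the initial condition $\mathbf{x}_0$ (time $0$) is reached.
   Context: Pursuer-fixed frame: the Evader's relative position $\mathbf{x}(t)=(x(t),y(t))\in\mathbb{R}^2$ evolves as $\dot x=\mu\cos\psi(t)-1$, $\dot y=\mu\sin\psi(t)$, $\mathbf{x}(0)=\mathbf{x}_0$ with $\|\mathbf{x}_0\|\ge1$, where $\mu\in(0,1)$ and $\psi(t)$ is the Evader's heading. For a fixed final time $T>0$, the Evader maximizes $\|\mathbf{x}(T)\|^2$ subject to the state constraint $\|\mathbf{x}(t)\|\ge 1$ for all $t\in[0,T]$. *)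

From HB Require Import structures.
From mathcomp Require Import all_boot all_order all_algebra.
From mathcomp Require Import all_classical all_reals all_analysis.
Set Implicit Arguments. Unset Strict Implicit. Unset Printing Implicit Defensive.
Import Order.TTheory GRing.Theory Num.Theory.
Local Open Scope classical_set_scope.
Local Open Scope ring_scope.

Definition sqnorm (R : realType) (p : R * R) : R := p.1 ^+ 2 + p.2 ^+ 2.

Definition admissible (R : realType) (psi : R -> R) : Prop :=
  measurable_fun setT psi.

(* Relative position x(t) in the Pursuer-fixed frame, the (Caratheodory)
   solution of  x' = mu cos psi - 1,  y' = mu sin psi,  x(0) = x0. *)
Definition traj (R : realType) (mu : R) (x0 : R * R) (psi : R -> R) (t : R)
  : R * R :=
  (x0.1 + \int[@lebesgue_measure R]_(s in `[0, t]) (mu * cos (psi s) - 1),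
   x0.2 + \int[@lebesgue_measure R]_(s in `[0, t]) (mu * sin (psi s))).

Definition feasible (R : realType) (mu T : R) (x0 : R * R) (psi : R -> R)
  : Prop :=
  forall t, 0 <= t <= T -> 1 <= sqnorm (traj mu x0 psi t).

Definition optimal (R : realType) (mu T : R) (x0 : R * R) (psi : R -> R)
  : Prop :=
  admissible psi /\ feasible mu T x0 psi /\
  forall phi : R -> R, admissible phi -> feasible mu T x0 phi ->
    sqnorm (traj mu x0 phi T) <= sqnorm (traj mu x0 psi T).

From mathcomp Require Import all_boot all_order all_algebra.
From mathcomp Require Import all_classical all_reals all_analysis.
From mathcomp Require Import ring lra.
Set Implicit Arguments. Unset Strict Implicit. Unset Printing Implicit Defensive.
Import Order.TTheory GRing.Theory Num.Theory.
Import numFieldNormedType.Exports.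
Local Open Scope classical_set_scope.
Local Open Scope ring_scope.

(* Write the final point as x(T) = r (cos c, sin c) and measure the deviation
   of the heading from this direction by g = 1 - cos (psi - c) >= 0.  On [a, T]
   with a > t1 the trajectory stays a positive distance above the unit circle
   (compactness), so replacing psi by the constant c on a short window
   [s, s + h] keeps the state constraint.  This moves x(T) by a vector d with
   <x(T), d> = mu r \int_s^(s+h) g, and |x(T) + d| > |x(T)| as soon as that is
   positive; optimality therefore makes the integral of g over every short
   window, hence over [a, T], nonpositive.  Letting a decrease to t1 gives
   \int_t1^T g = 0, so g = 0, i.e. psi = c modulo 2 pi, almost everywhere. *)

Section BoundedMeasurable.
Context {R : realType}.
Local Notation leb := (@lebesgue_measure R).

Definition bounded_measurable (f : R -> R) :=
  measurable_fun setT f /\ exists M, forall x, `|f x| <= M.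

Lemma bounded_measurable_cst k : bounded_measurable (fun=> k).
Proof. by split; [exact: measurable_cst | exists `|k|]. Qed.

Lemma bounded_measurableD f g : bounded_measurable f -> bounded_measurable g ->
  bounded_measurable (fun x => f x + g x).
Proof.
move=> [mf [M fM]] [mg [N gN]]; split; first exact: measurable_realfun.measurable_funD.
by exists (M + N) => x; apply: le_trans (ler_normD _ _) _; apply: lerD.
Qed.

Lemma bounded_measurableN f : bounded_measurable f ->
  bounded_measurable (fun x => - f x).
Proof.
move=> [mf [M fM]]; split; first exact: measurableT_comp mf.
by exists M => x; rewrite normrN.
Qed.

Lemma bounded_measurableM f g : bounded_measurable f -> bounded_measurable g ->
  bounded_measurable (fun x => f x * g x).
Proof.
move=> [mf [M fM]] [mg [N gN]]; split; first exact: measurable_realfun.measurable_funM.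
by exists (M * N) => x; rewrite normrM; apply: ler_pM.
Qed.

Lemma bounded_measurable_comp (F f : R -> R) M :
  continuous F -> (forall x, `|F x| <= M) -> measurable_fun setT f -> bounded_measurable (fun x => F (f x)).
Proof.
move=> cF FM mf; split; last by exists M.
exact: measurableT_comp (measurable_realfun.continuous_measurable_fun cF) mf.
Qed.

Lemma bounded_measurable_integrable f (A : set R) a b :
  bounded_measurable f -> measurable A -> A `<=` `[a, b] ->
  leb.-integrable A (EFin \o f).
Proof.
move=> [mf [M fM]] mA Aab.
apply: (@integrableS _ _ _ leb `[a, b] A);
  [exact: measurable_itv | exact: mA | exact: Aab |].
apply: measurable_bounded_integrable => //.
- rewrite /= lebesgue_measure_itv; case: ifP => _ //; exact: ltry.
- exact: measurable_funS mf.
- exists M; split; first by rewrite num_real.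
  by move=> M' MM' x _; exact: le_trans (fM x) (ltW MM').
Qed.

Lemma bounded_measurable_integrable_itv f a b : bounded_measurable f ->
  leb.-integrable `[a, b] (EFin \o f).
Proof. by move=> bf; apply: (bounded_measurable_integrable (a := a) (b := b) bf). Qed.

Lemma Rintegral_itv_split f a b c : bounded_measurable f -> a <= b -> b <= c ->
  \int[leb]_(x in `[a, c]) f x =
  \int[leb]_(x in `[a, b]) f x + \int[leb]_(x in `[b, c]) f x.
Proof.
move=> bf ab bc.
have := @Rintegral_itvB R f (BLeft a) (BRight c) b.
rewrite Rintegral_itv_obnd_cbnd; last first.
  apply: (bounded_measurable_integrable (a := b) (b := c) bf) => //.
  exact: subset_itv_oc_cc.
move=> <-; rewrite ?bnd_simp //; first by rewrite addrC subrK.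
exact: bounded_measurable_integrable_itv.
Qed.

Lemma Rintegral_itv_eq0 f a b : bounded_measurable f ->
  {in `]a, b[, forall x, f x = 0} -> \int[leb]_(x in `[a, b]) f x = 0.
Proof.
move=> bf f0.
rewrite -Rintegral_itv_bndo_bndc -?Rintegral_itv_obnd_cbnd; first last.
- by apply: (bounded_measurable_integrable (a := a) (b := b) bf) => // x;
     exact: subset_itv_co_cc.
- by apply: (bounded_measurable_integrable (a := a) (b := b) bf) => // x;
     exact: subset_itv_oo_cc.
rewrite (@eq_Rintegral _ _ _ leb _ (fun=> 0)); last by move=> x; rewrite inE => /f0.
by rewrite Rintegral_cst ?mul0r //; exact: measurable_itv.
Qed.

Lemma normr_Rintegral_itv_le f M a b : bounded_measurable f ->
  (forall x, `|f x| <= M) -> a <= b ->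
  `|\int[leb]_(x in `[a, b]) f x| <= M * (b - a).
Proof.
move=> bf fM ab.
have mab : measurable (`[a, b] : set (measurableTypeR R)) by exact: measurable_itv.
apply: le_trans (le_normr_Rintegral mab (bounded_measurable_integrable_itv a b bf)) _.
apply: le_trans (@le_Rintegral _ _ _ leb _ _ (fun=> M) mab _ _ _) _.
- exact: integrable_norm (bounded_measurable_integrable_itv a b bf).
- exact: bounded_measurable_integrable_itv a b (bounded_measurable_cst M).
- by move=> x _.
rewrite Rintegral_cst // /= lebesgue_measure_itv /=.
case: ltP => ab'; first by rewrite /= mulrC.
have M0 : 0 <= M by apply: le_trans (fM a).
by rewrite /= mulr0 mulr_ge0 // subr_ge0.
Qed.

End BoundedMeasurable.

Section Window.
Context {R : realType}.
Variables (D : R -> R) (s h M : R).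
Local Notation leb := (@lebesgue_measure R).
Hypotheses (bD : bounded_measurable D) (DM : forall x, `|D x| <= M).
Hypothesis D0 : forall t, t < s \/ s + h < t -> D t = 0.
Hypotheses (s_ge0 : 0 <= s) (h_ge0 : 0 <= h).

Lemma Rintegral_window_before (t : R) : t <= s -> \int[leb]_(x in `[0, t]) D x = 0.
Proof.
move=> ts; apply: Rintegral_itv_eq0 => // x; rewrite in_itv /= => /andP[_ xt].
by apply: D0; left; exact: lt_le_trans xt ts.
Qed.

Lemma Rintegral_window_within (t : R) : s <= t ->
  \int[leb]_(x in `[0, t]) D x = \int[leb]_(x in `[s, t]) D x.
Proof.
move=> st.
by rewrite (Rintegral_itv_split (b := s)) // Rintegral_window_before // add0r.
Qed.

Lemma Rintegral_window_after (t : R) : s + h <= t ->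
  \int[leb]_(x in `[0, t]) D x = \int[leb]_(x in `[s, s + h]) D x.
Proof.
have s_le_sh : s <= s + h by rewrite lerDl.
move=> sht; rewrite Rintegral_window_within; last exact: le_trans sht.
rewrite (Rintegral_itv_split (b := (s + h))) //.
rewrite [X in _ + X]Rintegral_itv_eq0 ?addr0 // => x.
by rewrite in_itv /= => /andP[shx _]; apply: D0; right.
Qed.

Lemma Rintegral_window_bound (t : R) : `|\int[leb]_(x in `[0, t]) D x| <= M * h.
Proof.
have M_ge0 : 0 <= M by apply: le_trans (DM 0).
have [ts|st] := leP t s.
  by rewrite Rintegral_window_before // normr0 mulr_ge0.
have [tsh|sht] := leP t (s + h).
  rewrite Rintegral_window_within; last exact: ltW.
  apply: le_trans (normr_Rintegral_itv_le bD DM (ltW st)) _.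
  by rewrite ler_wpM2l // lerBlDl.
rewrite Rintegral_window_after; last exact: ltW.
have := normr_Rintegral_itv_le bD DM (_ : s <= s + h).
by rewrite addrAC subrr add0r; apply; rewrite lerDl.
Qed.

End Window.

Section Covering.
Context {R : realType}.
Local Notation leb := (@lebesgue_measure R).

Lemma Rintegral_le0_of_windows g a b h0 : bounded_measurable g -> 0 < h0 -> a <= b ->
  (forall s h, a <= s -> 0 <= h -> h <= h0 -> s + h <= b ->
    \int[leb]_(x in `[s, s + h]) g x <= 0) ->
  \int[leb]_(x in `[a, b]) g x <= 0.
Proof.
move=> bg h0_gt0 ab win.
have [n nP] : exists n : nat, (b - a) / h0 < n%:R.
  exists (Num.bound ((b - a) / h0)); apply: archi_boundP.
  by rewrite divr_ge0 ?subr_ge0 // ltW.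
have n_gt0 : 0 < n%:R :> R by apply: le_lt_trans nP; rewrite divr_ge0 ?subr_ge0 // ltW.
pose h := (b - a) / n%:R.
have h_ge0 : 0 <= h by rewrite divr_ge0 ?subr_ge0 // ltW.
have hh0 : h <= h0 by rewrite ler_pdivrMr //; rewrite ltr_pdivrMr // in nP; lra.
have nh : n%:R * h = b - a by rewrite mulrC divfK // gt_eqF.
suff ind k : (k <= n)%N -> \int[leb]_(x in `[a, a + k%:R * h]) g x <= 0.
  by have := ind n (leqnn n); rewrite nh addrC subrK.
elim: k => [|k IH] kn.
  rewrite mul0r addr0.
  by have := win a 0 (lexx a) (lexx 0) (ltW h0_gt0); rewrite addr0; apply.
have kh_ge0 : 0 <= k%:R * h by rewrite mulr_ge0.
have kh_le : k.+1%:R * h <= b - a by rewrite -nh ler_wpM2r // ler_nat.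
rewrite -natr1 mulrDl mul1r addrA in kh_le *.
rewrite (Rintegral_itv_split (b := (a + k%:R * h))) //; [|lra|lra].
have := IH (ltnW kn); have := win (a + k%:R * h) h; lra.
Qed.

Lemma Rintegral_le0_of_tails g M a b : bounded_measurable g ->
  (forall x, `|g x| <= M) -> a <= b ->
  (forall c, a < c <= b -> \int[leb]_(x in `[c, b]) g x <= 0) ->
  \int[leb]_(x in `[a, b]) g x <= 0.
Proof.
move=> bg gM ab tail.
have M_ge0 : 0 <= M by apply: le_trans (gM 0).
have [{}ab|ba] := ltP a b; last first.
  have -> : b = a by apply/le_anti; rewrite ab ba.
  have := normr_Rintegral_itv_le bg gM (lexx a).
  by rewrite subrr mulr0 normr_le0 => /eqP ->.
apply/ler_addgt0Pr => e e_gt0; rewrite add0r.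
pose d := Num.min (e / (M + 1)) (b - a).
have d_gt0 : 0 < d by rewrite lt_min divr_gt0 ?subr_gt0 //; lra.
have dM : d * (M + 1) <= e by rewrite -ler_pdivlMr ?ge_min ?lexx //; lra.
have db : d <= b - a by rewrite ge_min lexx orbT.
rewrite (Rintegral_itv_split (b := (a + d))) //; [|lra|lra].
have := tail (a + d); have := normr_Rintegral_itv_le bg gM (_ : a <= a + d).
rewrite ler_norml addrAC subrr add0r; nra.
Qed.

Lemma ae_of_Rintegral_le0 g a b (P : R -> Prop) :
  bounded_measurable g -> (forall x, 0 <= g x) -> (forall x, g x = 0 -> P x) ->
  \int[leb]_(x in `[a, b]) g x <= 0 -> {ae leb, forall x, x \in `]a, b[ -> P x}.
Proof.
move=> bg g_ge0 gP int_le0.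
have mab : measurable (`[a, b] : set (measurableTypeR R)) by exact: measurable_itv.
have ig := bounded_measurable_integrable_itv a b bg.
have int0 : \int[leb]_(x in `[a, b]) g x = 0.
  by apply/eqP; rewrite eq_le int_le0 Rintegral_ge0.
have int0E : (\int[leb]_(x in `[a, b]) (g x)%:E = 0)%E.
  by rewrite -[LHS]fineK ?integrable_fin_num //; move: int0; rewrite /Rintegral => ->.
have abs_int0 : (\int[leb]_(x in `[a, b]) `|(EFin \o g) x| = 0)%E.
  by rewrite -int0E; apply: eq_integral => x _ /=; rewrite ger0_norm.
have := (ae_eq_integral_abs leb mab (integrableP _ _ _ ig).1).1 abs_int0.
by apply: filterS => x gx0 /subset_itv_oo_cc /gx0 [] /gP.
Qed.

End Covering.

Section Plane.
Context {R : realType}.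
Implicit Types p q : R * R.

Lemma unit_vector_angle (e1 e2 : R) : e1 ^+ 2 + e2 ^+ 2 = 1 ->
  exists c, cos c = e1 /\ sin c = e2.
Proof.
move=> e_unit.
have e1_bound : -1 <= e1 <= 1.
  have : e1 ^+ 2 <= 1 by rewrite -e_unit lerDl sqr_ge0.
  by move=> h; apply/andP; split; nra.
have sin_acos_e1 : Num.sqrt (1 - e1 ^+ 2) = `|e2|.
  by rewrite -e_unit addrAC subrr add0r sqrtr_sqr.
have cos_acos_e1 : cos (acos e1) = e1 by apply: acosK; rewrite in_itv.
have [e2_ge0|e2_lt0] := leP 0 e2.
  by exists (acos e1); rewrite cos_acos_e1 sin_acos // sin_acos_e1 ger0_norm.
exists (- acos e1).
by rewrite cosN sinN cos_acos_e1 sin_acos // sin_acos_e1 ltr0_norm // opprK.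
Qed.

Lemma sqnorm_ge0 p : 0 <= sqnorm p.
Proof. by rewrite addr_ge0 ?sqr_ge0. Qed.

Lemma polar_coordinates p :
  exists c, p.1 = Num.sqrt (sqnorm p) * cos c /\ p.2 = Num.sqrt (sqnorm p) * sin c.
Proof.
set r := Num.sqrt (sqnorm p).
have r2 : r ^+ 2 = sqnorm p by rewrite sqr_sqrtr // sqnorm_ge0.
have [r0|r_neq0] := eqVneq r 0.
  move: r2; rewrite r0 expr0n /= => /esym/eqP.
  rewrite /sqnorm paddr_eq0 ?sqr_ge0 // !sqrf_eq0 => /andP[/eqP-> /eqP->].
  by exists 0; rewrite !mul0r.
have [c [cc sc]] : exists c, cos c = p.1 / r /\ sin c = p.2 / r.
  apply: unit_vector_angle.
  by rewrite !expr_div_n -mulrDl -/(sqnorm p) -r2 divff // expf_neq0.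
by exists c; rewrite cc sc !(mulrC r) !divfK.
Qed.

Lemma sqnorm_lt_of_dot_gt0 p q :
  0 < q.1 * (p.1 - q.1) + q.2 * (p.2 - q.2) -> sqnorm q < sqnorm p.
Proof.
rewrite /sqnorm => dot_gt0.
by have := sqr_ge0 (p.1 - q.1); have := sqr_ge0 (p.2 - q.2); nra.
Qed.

Lemma sqnorm_perturbation_ge p q (B d : R) :
  `|q.1| <= B -> `|q.2| <= B -> `|p.1 - q.1| <= d -> `|p.2 - q.2| <= d ->
  sqnorm q - 4 * B * d <= sqnorm p.
Proof.
move=> q1B q2B d1 d2.
have /andP[k1 _] : - (B * d) <= q.1 * (p.1 - q.1) <= B * d.
  by rewrite -ler_norml normrM ler_pM.
have /andP[k2 _] : - (B * d) <= q.2 * (p.2 - q.2) <= B * d.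
  by rewrite -ler_norml normrM ler_pM.
rewrite /sqnorm; have := sqr_ge0 (p.1 - q.1); have := sqr_ge0 (p.2 - q.2); nra.
Qed.

Lemma cos_sub_eq1 (x c : R) : cos (x - c) = 1 -> cos x = cos c /\ sin x = sin c.
Proof.
rewrite cosB => h.
have := cos2Dsin2 x; have := cos2Dsin2 c.
have := sqr_ge0 (cos x - cos c); have := sqr_ge0 (sin x - sin c).
by split; nra.
Qed.

Lemma continuous_within_gt_margin (f : R -> R) a b l : a <= b ->
  {within `[a, b], continuous f} -> (forall t, a <= t <= b -> l < f t) ->
  exists2 m, 0 < m & forall t, a <= t <= b -> l + m <= f t.
Proof.
move=> ab cf fl; have [t0 t0ab t0min] := EVT_min ab cf.
exists (f t0 - l); first by rewrite subr_gt0; apply: fl; rewrite in_itv in t0ab.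
by move=> t tab; rewrite addrC subrK; apply: t0min; rewrite in_itv.
Qed.

Lemma continuous_within_sqnorm_shift (A : set R) (c : R * R) (f g : R -> R) :
  {within A, continuous f} -> {within A, continuous g} ->
  {within A, continuous (fun t => sqnorm (c.1 + f t, c.2 + g t))}.
Proof.
move=> cf cg t.
have cf' : {for t, continuous (fun s : subspace A => c.1 + f s)}.
  by apply: continuousD; [exact: cst_continuous | exact: cf].
have cg' : {for t, continuous (fun s : subspace A => c.2 + g s)}.
  by apply: continuousD; [exact: cst_continuous | exact: cg].
exact: continuousD (continuousM cf' cf') (continuousM cg' cg').
Qed.

End Plane.

Section Trajectory.
Context {R : realType}.
Variables (mu : R) (x0 : R * R).
Local Notation leb := (@lebesgue_measure R).
Implicit Types psi phi : R -> R.

Lemma bounded_measurable_xdot psi : measurable_fun setT psi ->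
  bounded_measurable (fun t => mu * cos (psi t) - 1).
Proof.
move=> mpsi; apply: bounded_measurableD (bounded_measurable_cst _).
apply: bounded_measurableM (bounded_measurable_cst _) _.
exact: bounded_measurable_comp (@continuous_cos R) (@cos_max R) mpsi.
Qed.

Lemma bounded_measurable_ydot psi : measurable_fun setT psi ->
  bounded_measurable (fun t => mu * sin (psi t)).
Proof.
move=> mpsi; apply: bounded_measurableM (bounded_measurable_cst _) _.
exact: bounded_measurable_comp (@continuous_sin R) (@sin_max R) mpsi.
Qed.

Lemma traj_sqnorm_continuous psi T : measurable_fun setT psi -> 0 <= T ->
  {within `[0, T], continuous (fun t => sqnorm (traj mu x0 psi t))}.
Proof.
move=> mpsi T_ge0; apply: continuous_within_sqnorm_shift.
- exact: parameterized_integral_continuous T_ge0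
    (bounded_measurable_integrable_itv 0 T (bounded_measurable_xdot mpsi)).
- exact: parameterized_integral_continuous T_ge0
    (bounded_measurable_integrable_itv 0 T (bounded_measurable_ydot mpsi)).
Qed.

Lemma traj_bounded psi T : measurable_fun setT psi -> `|mu| <= 1 -> 0 <= T ->
  exists2 B, 0 <= B & forall t, 0 <= t <= T ->
    `|(traj mu x0 psi t).1| <= B /\ `|(traj mu x0 psi t).2| <= B.
Proof.
move=> mpsi mu_le1 T_ge0.
exists (`|x0.1| + `|x0.2| + 2 * T); first by rewrite !addr_ge0 ?mulr_ge0.
move=> t /andP[t_ge0 tT].
have xdot_le2 x : `|mu * cos (psi x) - 1| <= 2.
  apply: le_trans (ler_normB _ _) _; rewrite normr1 normrM.
  by have := ler_pM (normr_ge0 _) (normr_ge0 _) mu_le1 (cos_max (psi x)); lra.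
have ydot_le2 x : `|mu * sin (psi x)| <= 2.
  rewrite normrM.
  by have := ler_pM (normr_ge0 _) (normr_ge0 _) mu_le1 (sin_max (psi x)); lra.
rewrite /traj /=; split; apply: le_trans (ler_normD _ _) _.
- have := normr_Rintegral_itv_le (bounded_measurable_xdot mpsi) xdot_le2 t_ge0.
  by have := normr_ge0 x0.2; lra.
- have := normr_Rintegral_itv_le (bounded_measurable_ydot mpsi) ydot_le2 t_ge0.
  by have := normr_ge0 x0.1; lra.
Qed.

Lemma traj_sub psi phi t : measurable_fun setT psi -> measurable_fun setT phi ->
  (traj mu x0 phi t).1 - (traj mu x0 psi t).1 =
    \int[leb]_(x in `[0, t]) (mu * (cos (phi x) - cos (psi x))) /\
  (traj mu x0 phi t).2 - (traj mu x0 psi t).2 =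
    \int[leb]_(x in `[0, t]) (mu * (sin (phi x) - sin (psi x))).
Proof.
move=> mpsi mphi.
have m0t : measurable (`[0, t] : set (measurableTypeR R)) by exact: measurable_itv.
rewrite /traj /= (addrC x0.1) (addrC x0.2) !addrKA.
rewrite -!RintegralB //; first by split; apply: eq_Rintegral => x _; ring.
- exact: bounded_measurable_integrable_itv (bounded_measurable_ydot mphi).
- exact: bounded_measurable_integrable_itv (bounded_measurable_ydot mpsi).
- exact: bounded_measurable_integrable_itv (bounded_measurable_xdot mphi).
- exact: bounded_measurable_integrable_itv (bounded_measurable_xdot mpsi).
Qed.

Definition heading_patch psi (c s h : R) : R -> R :=
  fun t => if (s <= t) && (t <= s + h) then c else psi t.

Lemma measurable_heading_patch psi c s h : measurable_fun setT psi ->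
  measurable_fun setT (heading_patch psi c s h).
Proof.
move=> mpsi; apply: measurable_fun_ifT => //.
by apply: measurable_and; apply: measurable_realfun.measurable_fun_ler => //;
  exact: measurable_cst.
Qed.

Lemma heading_patch_out psi c s h t :
  t < s \/ s + h < t -> heading_patch psi c s h t = psi t.
Proof.
rewrite /heading_patch => -[ts|sht]; first by rewrite leNgt ts.
by rewrite [t <= _]leNgt sht andbF.
Qed.

Lemma heading_patch_in psi c s h t : t \in `[s, s + h] -> heading_patch psi c s h t = c.
Proof. by rewrite /heading_patch in_itv /= => ->. Qed.

Definition misalignment psi (c : R) (t : R) : R := 1 - cos (psi t - c).

Lemma bounded_measurable_misalignment psi c : measurable_fun setT psi ->
  bounded_measurable (misalignment psi c).
Proof.
move=> mpsi.
apply: bounded_measurableD (bounded_measurable_cst _) (bounded_measurableN _).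
apply: bounded_measurable_comp (@continuous_cos R) (@cos_max R) _.
exact: measurable_realfun.measurable_funB mpsi (measurable_cst _).
Qed.

Lemma misalignment_ge0 psi c t : 0 <= misalignment psi c t.
Proof. by rewrite subr_ge0 cos_le1. Qed.

Lemma normr_misalignment_le2 psi c t : `|misalignment psi c t| <= 2.
Proof.
rewrite ger0_norm ?misalignment_ge0 // lerBlDr.
by have := cos_max (psi t - c); rewrite ler_norml => /andP[]; lra.
Qed.

Lemma misalignment_eq0 psi c t : misalignment psi c t = 0 ->
  cos (psi t) = cos c /\ sin (psi t) = sin c.
Proof. by move/eqP; rewrite subr_eq0 eq_sym => /eqP; exact: cos_sub_eq1. Qed.

End Trajectory.

Section PatchedTrajectory.
Context {R : realType}.
Variables (mu : R) (x0 : R * R) (psi : R -> R) (c s h : R).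
Local Notation leb := (@lebesgue_measure R).
Local Notation phi := (heading_patch psi c s h).
Hypotheses (mpsi : measurable_fun setT psi) (mu_le1 : `|mu| <= 1).
Hypotheses (s_ge0 : 0 <= s) (h_ge0 : 0 <= h).

Lemma patch_increment_window (F : R -> R) : continuous F -> (forall x, `|F x| <= 1) ->
  let D x := mu * (F (phi x) - F (psi x)) in
  [/\ bounded_measurable D, forall x, `|D x| <= 2 &
      forall t, t < s \/ s + h < t -> D t = 0].
Proof.
move=> cF F_le1 D; split.
- apply: bounded_measurableM (bounded_measurable_cst _) _.
  apply: bounded_measurableD (bounded_measurableN _).
    exact: bounded_measurable_comp cF F_le1 (measurable_heading_patch c s h mpsi).
  exact: bounded_measurable_comp cF F_le1 mpsi.
- move=> x; have F_sub : `|F (phi x) - F (psi x)| <= 2.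
    apply: le_trans (ler_normB _ _) _.
    by have := F_le1 (phi x); have := F_le1 (psi x); lra.
  by rewrite normrM -[2]mul1r ler_pM.
- by move=> t /(heading_patch_out psi c) phi_t; rewrite /D phi_t subrr mulr0.
Qed.

Let cos_window := patch_increment_window (@continuous_cos R) (@cos_max R).
Let sin_window := patch_increment_window (@continuous_sin R) (@sin_max R).
Let traj_sub_patch t := traj_sub mu x0 t mpsi (measurable_heading_patch c s h mpsi).

Lemma traj_patch_before t : t <= s -> traj mu x0 phi t = traj mu x0 psi t.
Proof.
move=> ts; have [bD1 _ D10] := cos_window; have [bD2 _ D20] := sin_window.
have [] := traj_sub_patch t.
rewrite (Rintegral_window_before bD1 D10 ts) (Rintegral_window_before bD2 D20 ts).
by case: (traj _ _ phi t) (traj _ _ psi t) => ? ? [? ?] /= /subr0_eq -> /subr0_eq ->.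
Qed.

Lemma traj_patch_near t :
  `|(traj mu x0 phi t).1 - (traj mu x0 psi t).1| <= 2 * h /\
  `|(traj mu x0 phi t).2 - (traj mu x0 psi t).2| <= 2 * h.
Proof.
have [bD1 D1_le2 D10] := cos_window; have [bD2 D2_le2 D20] := sin_window.
have [-> ->] := traj_sub_patch t.
split; first exact: Rintegral_window_bound bD1 D1_le2 D10 s_ge0 h_ge0 t.
exact: Rintegral_window_bound bD2 D2_le2 D20 s_ge0 h_ge0 t.
Qed.

Lemma traj_patch_gain T r : s + h <= T ->
  r * cos c * ((traj mu x0 phi T).1 - (traj mu x0 psi T).1) +
  r * sin c * ((traj mu x0 phi T).2 - (traj mu x0 psi T).2) =
  mu * r * \int[leb]_(x in `[s, s + h]) misalignment psi c x.
Proof.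
move=> shT; have [bD1 _ D10] := cos_window; have [bD2 _ D20] := sin_window.
have [-> ->] := traj_sub_patch T.
rewrite (Rintegral_window_after bD1 D10 s_ge0 h_ge0 shT).
rewrite (Rintegral_window_after bD2 D20 s_ge0 h_ge0 shT).
have mI : measurable (`[s, s + h] : set (measurableTypeR R)) by exact: measurable_itv.
have iD1 := bounded_measurable_integrable_itv s (s + h) bD1.
have iD2 := bounded_measurable_integrable_itv s (s + h) bD2.
rewrite -!RintegralZl -?RintegralD //; last 3 first.
- exact/bounded_measurable_integrable_itv/bounded_measurableM/bD1/bounded_measurable_cst.
- exact/bounded_measurable_integrable_itv/bounded_measurableM/bD2/bounded_measurable_cst.
- exact: bounded_measurable_integrable_itv (bounded_measurable_misalignment c mpsi).
apply: eq_Rintegral => x; rewrite inE => /heading_patch_in ->.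
transitivity (mu * r * (cos c ^+ 2 + sin c ^+ 2 - cos (psi x - c))).
  by rewrite cosB; ring.
by rewrite cos2Dsin2.
Qed.

Lemma feasible_heading_patch T a m B : feasible mu T x0 psi -> a <= s ->
  (forall t, a <= t <= T -> 1 + m <= sqnorm (traj mu x0 psi t)) ->
  (forall t, 0 <= t <= T ->
    `|(traj mu x0 psi t).1| <= B /\ `|(traj mu x0 psi t).2| <= B) ->
  8 * B * h <= m -> feasible mu T x0 phi.
Proof.
move=> feas a_le_s margin bounded hm t /[dup] t_range /andP[t_ge0 tT].
have [ts|st] := leP t s.
  by rewrite traj_patch_before //; apply: feas.
have [q1 q2] := bounded t t_range.
have [d1 d2] := traj_patch_near t.
have := sqnorm_perturbation_ge q1 q2 d1 d2.
have := margin t; rewrite tT (le_trans a_le_s (ltW st)) => /(_ isT).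
lra.
Qed.

End PatchedTrajectory.

Section Optimality.
Context {R : realType}.
Variables (mu T : R) (x0 : R * R) (psi : R -> R) (c : R).
Local Notation leb := (@lebesgue_measure R).
Local Notation P := (traj mu x0 psi T).
Hypotheses (mu_gt0 : 0 < mu) (mu_le1 : mu <= 1) (opt : optimal mu T x0 psi).
Hypotheses (P1 : P.1 = Num.sqrt (sqnorm P) * cos c)
  (P2 : P.2 = Num.sqrt (sqnorm P) * sin c).

Lemma optimal_misalignment_windows a : 0 <= a <= T ->
  (forall t, a <= t <= T -> 1 < sqnorm (traj mu x0 psi t)) ->
  exists2 h0, 0 < h0 & forall s h, a <= s -> 0 <= h -> h <= h0 -> s + h <= T ->
    \int[leb]_(x in `[s, s + h]) misalignment psi c x <= 0.
Proof.
move=> /andP[a_ge0 aT] free.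
have T_ge0 := le_trans a_ge0 aT.
have [mpsi [feas better]] := (opt : _ /\ _ /\ _).
have mu_abs : `|mu| <= 1 by rewrite ger0_norm // ltW.
have r_gt0 : 0 < Num.sqrt (sqnorm P).
  by rewrite sqrtr_gt0; apply: lt_trans (free T _); rewrite ?aT ?lexx.
have [m m_gt0 margin] : exists2 m, 0 < m &
    forall t, a <= t <= T -> 1 + m <= sqnorm (traj mu x0 psi t).
  apply: continuous_within_gt_margin aT _ free.
  apply: continuous_subspaceW (traj_sqnorm_continuous mpsi T_ge0).
  by apply: subset_itvr; rewrite bnd_simp.
have [B B_ge0 bounded] := traj_bounded x0 mpsi mu_abs T_ge0.
(* A patch of length h moves each coordinate of the trajectory by at most 2 h,
   which lowers its squared norm by at most 8 B h. *)
have B8_gt0 : 0 < 8 * (B + 1) by rewrite mulr_gt0 // ltr_wpDl.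
exists (m / (8 * (B + 1))); first by rewrite divr_gt0.
move=> s h a_le_s h_ge0 hh0 shT; rewrite leNgt; apply/negP => int_gt0.
have s_ge0 := le_trans a_ge0 a_le_s.
have hm : 8 * B * h <= m.
  by rewrite ler_pdivlMr // in hh0; have := mulr_ge0 B_ge0 h_ge0; nra.
have feas_patch :=
  feasible_heading_patch c mpsi mu_abs s_ge0 h_ge0 feas a_le_s margin bounded hm.
have := better _ (measurable_heading_patch c s h mpsi) feas_patch.
apply/negP; rewrite -ltNge; apply: sqnorm_lt_of_dot_gt0.
have := traj_patch_gain x0 c mpsi mu_abs s_ge0 h_ge0 (Num.sqrt (sqnorm P)) shT.
rewrite -P1 -P2 => ->.
by rewrite !mulr_gt0.
Qed.

End Optimality.

Theorem lemma4 (R : realType) (mu T : R) (x0 : R * R) (psi : R -> R) (t1 : R) :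
  0 < mu -> mu < 1 -> 0 < T -> 1 <= sqnorm x0 ->
  optimal mu T x0 psi ->
  0 <= t1 <= T ->
  (t1 = 0 \/ sqnorm (traj mu x0 psi t1) = 1) ->
  (forall t, t1 < t <= T -> 1 < sqnorm (traj mu x0 psi t)) ->
  exists c : R, {ae @lebesgue_measure R, forall t, t \in `]t1, T[ ->
      cos (psi t) = cos c /\ sin (psi t) = sin c}.
Proof.
move=> mu_gt0 mu_lt1 _ _ opt /andP[t1_ge0 t1T] _ free.
have mpsi : measurable_fun setT psi by case: opt.
have [c [P1 P2]] := polar_coordinates (traj mu x0 psi T).
have bg := bounded_measurable_misalignment c mpsi.
have tails a : t1 < a <= T ->
    \int[@lebesgue_measure R]_(x in `[a, T]) misalignment psi c x <= 0.
  move=> /andP[t1a aT].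
  have a_range : 0 <= a <= T by rewrite aT (le_trans t1_ge0 (ltW t1a)).
  have free_a t : a <= t <= T -> 1 < sqnorm (traj mu x0 psi t).
    by move=> /andP[a_le_t tT]; apply: free; rewrite tT (lt_le_trans t1a a_le_t).
  have [h0 h0_gt0 windows] :=
    optimal_misalignment_windows mu_gt0 (ltW mu_lt1) opt P1 P2 a_range free_a.
  exact: Rintegral_le0_of_windows bg h0_gt0 aT windows.
exists c; apply: (ae_of_Rintegral_le0 bg (@misalignment_ge0 _ psi c)).
  exact: misalignment_eq0.
exact: Rintegral_le0_of_tails bg (@normr_misalignment_le2 _ psi c) t1T tails.
Qed.
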